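(* Under the setting where $\widehat E_\varGamma\subseteq E_\varGamma$ is obtained by including each edge independently with probability $p\in(0,1]$ and $\widehat C_M=\frac{1}{pl}\sum_{e\in\widehat E_\varGamma}\eta(e)$, for every $\varepsilon>0$ (and assuming $C_M>0$), $$\Pr\big[|\widehat C_M-C_M|\ge\varepsilon C_M\big]\le\frac{1-p}{p\varepsilon^2}.$$
   Context: A temporal graph $\varGamma=(V_\varGamma,E_\varGamma)$ consists of a finite vertex set $V_\varGamma$ and a finite sequence $E_\varGamma$ of $m$ temporal edges $e=(u,v,t)$ with $u,v\in V_\varGamma$ and timestamp $t\in\mathbb{R}^+$; timestamps are pairwise distinct. A temporal motif $M$ is an ordered sequence of $l$ directed edges $\langle e'_1=(u'_1,v'_1),\dots,e'_l=(u'_l,v'_l)\rangle$ on a vertex set $V_M$ of $k$ vertices, whose underlying graph is connected. Fix $\delta\ge0$. A sequence $S=\langle (w_1,x_1,t_1),\dots,(w_l,x_l,t_l)\rangle$ of $l$ edges of $E_\varGamma$ with $t_1<\dots<t_l$ is a $\delta$-instance of $M$ if there is a bijection $f$ from the vertices of $S$ to $V_M$ with $f(w_i)=u'_i$ and $f(x_i)=v'_i$ for all $i$, and $t_l-t_1\le\delta$. $C_M$ denotes the number of $\delta$-instances of $M$ in $\varGamma$. For $e\in E_\varGamma$, $\eta(e)$ is the number of $\delta$-instances of $M$ containing $e$. *)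

From HB Require Import structures.
From mathcomp Require Import all_boot all_order all_algebra.
Set Implicit Arguments. Unset Strict Implicit. Unset Printing Implicit Defensive.
Import Order.TTheory GRing.Theory Num.Theory.
Local Open Scope ring_scope.

Section TemporalMotifs.
Variable R : realFieldType.
Variable V : finType.
Variable m : nat.
Variable E : 'I_m -> V * V * R.
Variable VM : finType.
Variable l : nat.
Variable M : 'I_l -> VM * VM.
Variable delta : R.

Definition esrc (i : 'I_m) : V := (E i).1.1.
Definition edst (i : 'I_m) : V := (E i).1.2.
Definition etime (i : 'I_m) : R := (E i).2.

Definition temporal_graph : Prop :=
  (forall i, 0 < etime i) /\ injective etime.

Definition motif_adj : rel VM :=
  fun x y => [exists i : 'I_l, (M i == (x, y)) || (M i == (y, x))].
Definition motif_connected : Prop := forall x y : VM, connect motif_adj x y.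

Definition inst_verts (s : {ffun 'I_l -> 'I_m}) : {set V} :=
  [set w | [exists i : 'I_l, (w == esrc (s i)) || (w == edst (s i))]].

(* s is a delta-instance of M (decidable: everything ranges over finite types). *)
Definition is_instance (s : {ffun 'I_l -> 'I_m}) : bool :=
  [&& [forall i : 'I_l, forall j : 'I_l, (i < j)%N ==> (etime (s i) < etime (s j))],
      [exists f : {ffun V -> VM},
        [&& [forall x in inst_verts s, forall y in inst_verts s,
               (f x == f y) ==> (x == y)],
            f @: inst_verts s == [set: VM] &
            [forall i : 'I_l,
               (f (esrc (s i)) == (M i).1) && (f (edst (s i)) == (M i).2)]]] &
      [forall i : 'I_l, forall j : 'I_l,
         [&& val i == 0%N & val j == l.-1] ==> (etime (s j) - etime (s i) <= delta)]].

Definition instances : {set {ffun 'I_l -> 'I_m}} := [set s | is_instance s].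

Definition count_CM : nat := #|instances|.

Definition eta (e : 'I_m) : nat := #|[set s in instances | e \in codom s]|.

(* Sampling: X e = true iff edge e is kept; keep each edge independently w.p. p. *)
Definition sample_weight (p : R) (X : {ffun 'I_m -> bool}) : R :=
  \prod_(e < m) (if X e then p else 1 - p).

Definition Pr (p : R) (A : pred {ffun 'I_m -> bool}) : R :=
  \sum_(X | A X) sample_weight p X.

Definition estimator (p : R) (X : {ffun 'I_m -> bool}) : R :=
  (p * l%:R)^-1 * \sum_(e < m | X e) (eta e)%:R.

End TemporalMotifs.

(* The estimator is unbiased: every instance has exactly l edges, so summing
   eta over all edges counts each instance l times.  Being a linear function
   of independent Bernoulli(p) indicators, its variance is
   (1 - p) / (p l^2) * sum_e eta(e)^2, and eta(e) <= C_M bounds this by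
   (1 - p) C_M^2 / p.  Chebyshev's inequality then gives the tail bound. *)
From Pilot Require Import Defs.
From HB Require Import structures.
From mathcomp Require Import all_boot all_order all_algebra.
From mathcomp Require Import ring.
Import Order.TTheory GRing.Theory Num.Theory.

Set Implicit Arguments.
Unset Strict Implicit.

Section DoubleCounting.
Variables (R : realFieldType) (V : finType) (m : nat) (E : 'I_m -> V * V * R)
  (VM : finType) (l : nat) (M : 'I_l -> VM * VM) (delta : R).

Lemma instance_injective s : s \in instances E M delta -> injective s.
Proof.
rewrite inE => /and3P[/forallP increasing _ _] i j sij.
have ltF (k k' : 'I_l) : (k < k')%N -> s k = s k' -> False.
  move=> lt_kk' skk'; move/forallP/(_ k'): (increasing k).
  by rewrite lt_kk' skk' ltxx.
by case: (ltngtP i j) => [/ltF/(_ sij)|/ltF/(_ (esym sij))|/val_inj].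
Qed.

Lemma sum_eta : (\sum_(e < m) Defs.eta E M delta e = l * count_CM E M delta)%N.
Proof.
rewrite /Defs.eta /count_CM.
transitivity (\sum_(e < m) \sum_(s in instances E M delta) (e \in codom s : nat))%N.
  apply: eq_bigr => e _; rewrite -sum1_card big_mkcond [RHS]big_mkcond /=.
  by apply: eq_bigr => s _; rewrite inE; case: (s \in _); case: (e \in _).
rewrite exchange_big /= mulnC -sum_nat_const; apply: eq_bigr => s inst_s.
rewrite -[l in RHS]card_ord -(card_codom (instance_injective inst_s)).
rewrite -sum1_card big_mkcond [RHS]big_mkcond.
by apply: eq_bigr => e _; case: (e \in _).
Qed.

Lemma eta_le_count e : (Defs.eta E M delta e <= count_CM E M delta)%N.
Proof. by apply: subset_leq_card; apply/subsetP => s; rewrite inE => /andP[]. Qed.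

Lemma sum_eta_sqr_le :
  (\sum_(e < m) Defs.eta E M delta e ^ 2 <= l * count_CM E M delta ^ 2)%N.
Proof.
apply: (@leq_trans (\sum_(e < m) count_CM E M delta * Defs.eta E M delta e)).
  by apply: leq_sum => e _; rewrite expnS expn1 leq_mul2r eta_le_count orbT.
by rewrite -big_distrr /= sum_eta mulnCA mulnn.
Qed.

End DoubleCounting.

Local Open Scope ring_scope.

Lemma sum_ffun_bool_prod (R : comPzRingType) (I : finType) (F : I -> bool -> R) :
  \sum_(X : {ffun I -> bool}) \prod_i F i (X i) = \prod_i (F i true + F i false).
Proof. by rewrite -bigA_distr_bigA; apply: eq_bigr => i _; rewrite big_bool. Qed.

Lemma weighted_chebyshev (R : realFieldType) (T : finType) (w Y : T -> R) (t : R) :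
  (forall x, 0 <= w x) -> 0 < t ->
  \sum_(x | t <= `|Y x|) w x <= (\sum_x w x * Y x ^+ 2) / t ^+ 2.
Proof.
move=> w_ge0 t_gt0; rewrite ler_pdivlMr ?exprn_gt0 // mulr_suml.
rewrite [X in _ <= X](bigID (fun x => t <= `|Y x|)) /= -[leLHS]addr0.
apply: lerD; last by apply: sumr_ge0 => x _; rewrite mulr_ge0 ?sqr_ge0.
apply: ler_sum => x tY; rewrite ler_wpM2l // -[Y x ^+ 2]real_normK ?num_real //.
by rewrite lerXn2r ?nnegrE ?(ltW t_gt0) // (le_trans (ltW t_gt0)).
Qed.

Section BernoulliSampling.
Variables (R : realFieldType) (m : nat) (p : R).

Lemma sample_weight_ge0 (X : {ffun 'I_m -> bool}) :
  0 < p -> p <= 1 -> 0 <= sample_weight p X.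
Proof.
move=> p_gt0 p_le1; apply: prodr_ge0 => i _.
by case: (X i); rewrite ?subr_ge0 ?(ltW p_gt0).
Qed.

Lemma sample_covariance (e f : 'I_m) :
  \sum_(X : {ffun 'I_m -> bool})
    sample_weight p X * (((X e)%:R - p) * ((X f)%:R - p))
  = if e == f then p * (1 - p) else 0.
Proof.
pose wt (b : bool) : R := if b then p else 1 - p.
pose c (i : 'I_m) (b : bool) : R :=
  (if i == e then b%:R - p else 1) * (if i == f then b%:R - p else 1).
have prod_at i0 (x : R) : \prod_(i < m) (if i == i0 then x else 1) = x.
  by rewrite (bigD1 i0) //= eqxx big1 ?mulr1 // => i /negbTE ->.
(* Independence: the summand factors over the coordinates of [X]. *)
transitivity (\sum_(X : {ffun 'I_m -> bool}) \prod_i (wt (X i) * c i (X i))).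
  apply: eq_bigr => X _; rewrite big_split /= big_split /=.
  rewrite -[(X e)%:R - p](prod_at e) -[(X f)%:R - p](prod_at f).
  by congr (_ * (_ * _)); apply: eq_bigr => i _; case: eqP => // ->.
rewrite (sum_ffun_bool_prod (fun i b => wt b * c i b)) (bigD1 e) //= /c eqxx.
case: eqP => [<-|_].
  rewrite big1 => [|i /negbTE ->]; last by rewrite /wt !mulr1 addrC subrK.
  by rewrite /wt /=; ring.
suff -> : p * ((true%:R - p) * 1) + (1 - p) * ((false%:R - p) * 1) = 0 :> R.
  by rewrite mul0r.
by rewrite /=; ring.
Qed.

Lemma sample_variance_linear (a : 'I_m -> R) :
  \sum_(X : {ffun 'I_m -> bool})
    sample_weight p X * (\sum_e a e * ((X e)%:R - p)) ^+ 2
  = p * (1 - p) * \sum_e a e ^+ 2.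
Proof.
transitivity (\sum_(X : {ffun 'I_m -> bool}) \sum_e \sum_f
    a e * a f * (sample_weight p X * (((X e)%:R - p) * ((X f)%:R - p)))).
  apply: eq_bigr => X _; rewrite expr2 mulr_suml mulr_sumr.
  apply: eq_bigr => e _; rewrite mulr_sumr mulr_sumr.
  by apply: eq_bigr => f _; ring.
rewrite exchange_big mulr_sumr; apply: eq_bigr => e _ /=; rewrite exchange_big /=.
rewrite (bigD1 e) //= -mulr_sumr sample_covariance eqxx big1 ?addr0 => [|f ne_fe].
  by rewrite expr2 mulrC.
by rewrite -mulr_sumr sample_covariance eq_sym (negbTE ne_fe) mulr0.
Qed.

End BernoulliSampling.

Section Estimator.
Variables (R : realFieldType) (V : finType) (m : nat) (E : 'I_m -> V * V * R)
  (VM : finType) (l : nat) (M : 'I_l -> VM * VM) (delta : R) (p : R).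
Hypotheses (l_gt0 : (0 < l)%N) (p_gt0 : 0 < p).

Let C : R := (count_CM E M delta)%:R.
Let a (e : 'I_m) : R := (p * l%:R)^-1 * (Defs.eta E M delta e)%:R.

Lemma estimator_centered X :
  estimator E M delta p X - C = \sum_e a e * ((X e)%:R - p).
Proof.
have lR : (l%:R : R) != 0 by rewrite pnatr_eq0 -lt0n.
under eq_bigr do rewrite mulrBr; rewrite sumrB; congr (_ - _).
  rewrite /estimator big_mkcond mulr_sumr; apply: eq_bigr => e _.
  by rewrite /a; case: (X e); rewrite ?mulr1 ?mulr0.
rewrite -mulr_suml -mulr_sumr -natr_sum sum_eta natrM /C.
by field; rewrite lR gt_eqF.
Qed.

Lemma estimator_variance_le : p <= 1 ->
  \sum_(X : {ffun 'I_m -> bool})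
    sample_weight p X * (estimator E M delta p X - C) ^+ 2
  <= (1 - p) / p * C ^+ 2.
Proof.
move=> p_le1; have lR : 0 < (l%:R : R) by rewrite ltr0n.
under eq_bigr do rewrite estimator_centered.
rewrite sample_variance_linear.
have -> : p * (1 - p) * \sum_e a e ^+ 2
    = (1 - p) / p / l%:R ^+ 2 * (\sum_(e < m) Defs.eta E M delta e ^ 2)%:R.
  rewrite natr_sum mulr_sumr mulr_sumr; apply: eq_bigr => e _.
  by rewrite /a natrX; field; rewrite !gt_eqF.
have coef_ge0 : 0 <= (1 - p) / p / l%:R ^+ 2.
  by rewrite !divr_ge0 ?subr_ge0 ?exprn_ge0 ?(ltW p_gt0) ?(ltW lR).
have sum_le : (\sum_(e < m) Defs.eta E M delta e ^ 2)%:R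
    <= (l * count_CM E M delta ^ 2)%:R :> R.
  by rewrite ler_nat; exact: sum_eta_sqr_le.
apply: le_trans (ler_wpM2l coef_ge0 sum_le) _.
have -> : (1 - p) / p / l%:R ^+ 2 * (l * count_CM E M delta ^ 2)%:R
    = (1 - p) / p * C ^+ 2 / l%:R.
  by rewrite natrM natrX; field; rewrite !gt_eqF.
rewrite ler_pdivrMr // ler_peMr ?ler1n //.
by rewrite mulr_ge0 ?sqr_ge0 ?divr_ge0 ?subr_ge0 ?(ltW p_gt0).
Qed.

End Estimator.

Theorem theorem3 (R : realFieldType) (V : finType) (m : nat)
  (E : 'I_m -> V * V * R) (VM : finType) (l : nat) (M : 'I_l -> VM * VM)
  (delta : R) (p eps : R) :
  temporal_graph E ->
  (0 < l)%N -> motif_connected M ->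
  0 <= delta ->
  0 < p -> p <= 1 -> 0 < eps ->
  (0 < count_CM E M delta)%N ->
  Pr p (fun X => eps * (count_CM E M delta)%:R
                 <= `|estimator E M delta p X - (count_CM E M delta)%:R|)
  <= (1 - p) / (p * eps ^+ 2).
Proof.
move=> _ l_gt0 _ _ p_gt0 p_le1 eps_gt0 C_gt0.
set C : R := (count_CM E M delta)%:R.
have C_pos : 0 < C by rewrite ltr0n.
have w_ge0 (X : {ffun 'I_m -> bool}) : 0 <= sample_weight p X.
  exact: sample_weight_ge0.
apply: le_trans (weighted_chebyshev
  (fun X => estimator E M delta p X - C) w_ge0 (mulr_gt0 eps_gt0 C_pos)) _.
apply: le_trans (ler_wpM2r _ (estimator_variance_le E M delta l_gt0 p_gt0 p_le1)) _.
  by rewrite invr_ge0 sqr_ge0.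
rewrite [leLHS](_ : _ = (1 - p) / (p * eps ^+ 2)) //.
by field; rewrite !gt_eqF.
Qed.
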